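(* Let $(X,\varphi)$ be an irreducible Smale space, $\mathcal R_1$ a Markov partition with $\max_{R\in\mathcal R_1}\operatorname{diam}R\le\varepsilon_X''/2$, and $\mathcal R_n=\{R\in\bigvee_{i=1-n}^{n-1}\varphi^{-i}(\mathcal R_1):\operatorname{int}R\ne\varnothing\}$ for $n\in\mathbb N$. If $\varphi^{-1}$ is Lipschitz then for every $n\in\mathbb N$ $$\min_{R\in\mathcal R_n}\operatorname{diam}(R)\ge\operatorname{Lip}(\varphi^{-1})^{-n+1}\,\underline{\operatorname{diam}}_s\mathcal R_1,$$ and if $\varphi$ is Lipschitz then for every $n\in\mathbb N$ $$\min_{R\in\mathcal R_n}\operatorname{diam}(R)\ge\operatorname{Lip}(\varphi)^{-n+1}\,\underline{\operatorname{diam}}_u\mathcal R_1.$$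
   Context: Here $\underline{\operatorname{diam}}_s\mathcal R_1=\min_{R\in\mathcal R_1}\inf_{x\in R}\operatorname{diam}(X^s(x,R))$ and $\underline{\operatorname{diam}}_u\mathcal R_1=\min_{R\in\mathcal R_1}\inf_{x\in R}\operatorname{diam}(X^u(x,R))$. A Smale space $(X,\varphi)$: compact metric space $(X,d)$ (assumed infinite), homeomorphism $\varphi$, constants $\varepsilon_X>0,\lambda_X>1$ and a continuous bracket $[\cdot,\cdot]$ on $\{(x,y):d(x,y)\le\varepsilon_X\}$ with $[x,x]=x$, $[x,[y,z]]=[x,z]$, $[[x,y],z]=[x,z]$, $\varphi([x,y])=[\varphi(x),\varphi(y)]$ (whenever defined), such that $\varphi$ contracts distances by $\lambda_X^{-1}$ on local stable sets $X^s(x,\varepsilon)=\{y:d(x,y)<\varepsilon,[x,y]=y\}$ and $\varphi^{-1}$ contracts by $\lambda_X^{-1}$ on local unstable sets $X^u(x,\varepsilon)=\{y:d(x,y)<\varepsilon,[y,x]=y\}$. Irreducible: for nonempty open $U,V$ some $n\in\mathbb N$ has $\varphi^n(U)\cap V\ne\varnothing$. Fix $\varepsilon_X'\in(0,\varepsilon_X/2]$ with $d(x,y)\le\varepsilon_X'\Rightarrow d(x,[x,y]),d(y,[x,y])<\varepsilon_X/2$, and $\varepsilon_X''\in(0,\varepsilon_X'/12)$ with $d(x,y)\le\varepsilon_X''\Rightarrow d(\varphi^i x,\varphi^i y)\le\varepsilon_X'/2$ ($|i|\le2$) and $d([x,y],x),d([x,y],y)\le\varepsilon_X'/4$. Rectangle: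 nonempty $R$, $\operatorname{diam}R\le\varepsilon_X'$, $[x,y]\in R$ for $x,y\in R$; $X^{s}(x,R)=X^{s}(x,2\varepsilon_X')\cap R$, $X^{u}(x,R)=X^{u}(x,2\varepsilon_X')\cap R$; proper: closed with $R=\operatorname{cl}\operatorname{int}R$. Markov partition: finite cover by nonempty proper rectangles with pairwise disjoint interiors such that $\varphi(X^u(x,R_i))\supset X^u(\varphi x,R_j)$ and $\varphi(X^s(x,R_i))\subset X^s(\varphi x,R_j)$ whenever $x\in\operatorname{int}R_i\cap\varphi^{-1}(\operatorname{int}R_j)$. $\mathcal U\vee\mathcal W=\{U\cap W\}$. *)

From Stdlib Require Import Reals List ZArith.
From Coquelicot Require Import Rbar Lub.
Open Scope R_scope.

Section SmaleDefs.
Variable X : Type.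
Variable d : X -> X -> R.

Definition is_metric : Prop :=
  (forall x y, 0 <= d x y) /\ (forall x y, d x y = 0 <-> x = y) /\
  (forall x y, d x y = d y x) /\ (forall x y z, d x z <= d x y + d y z).

Definition sm_open (U : X -> Prop) : Prop :=
  forall x, U x -> exists r, 0 < r /\ forall y, d x y < r -> U y.
Definition sm_interior (A : X -> Prop) : X -> Prop :=
  fun x => exists r, 0 < r /\ forall y, d x y < r -> A y.
Definition sm_closure (A : X -> Prop) : X -> Prop :=
  fun x => forall r, 0 < r -> exists y, A y /\ d x y < r.
Definition sm_closed (A : X -> Prop) : Prop := forall x, sm_closure A x -> A x.

Definition sm_compact : Prop :=
  forall (I : Type) (U : I -> X -> Prop),
    (forall i, sm_open (U i)) -> (forall x, exists i, U i x) ->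
    exists l : list I, forall x, exists i, In i l /\ U i x.

Definition sm_infinite : Prop := ~ exists l : list X, forall x, In x l.

Definition sm_continuous (f : X -> X) : Prop :=
  forall x e, 0 < e -> exists del, 0 < del /\ forall y, d x y < del -> d (f x) (f y) < e.

(* diameter: sup of distances (0 for the empty set) *)
Definition diam (A : X -> Prop) : R :=
  real (Lub_Rbar (fun r => exists x y, A x /\ A y /\ r = d x y)).

Definition zpow (phi phiinv : X -> X) (i : Z) (x : X) : X :=
  match i with
  | Z0 => x
  | Zpos p => Nat.iter (Pos.to_nat p) phi x
  | Zneg p => Nat.iter (Pos.to_nat p) phiinv x
  end.

(* Smale space (bracket given as a total function, only used where defined) *)
Definition is_smale_space (phi phiinv : X -> X) (br : X -> X -> X) (epsX lamX : R) : Prop :=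
  is_metric /\ sm_compact /\ sm_infinite /\
  (forall x, phi (phiinv x) = x) /\ (forall x, phiinv (phi x) = x) /\
  sm_continuous phi /\ sm_continuous phiinv /\
  0 < epsX /\ 1 < lamX /\
  (forall x y e, d x y <= epsX -> 0 < e -> exists del, 0 < del /\
     forall x' y', d x' y' <= epsX -> d x x' < del -> d y y' < del ->
       d (br x y) (br x' y') < e) /\
  (forall x, br x x = x) /\
  (forall x y z, d y z <= epsX -> d x (br y z) <= epsX -> d x z <= epsX ->
     br x (br y z) = br x z) /\
  (forall x y z, d x y <= epsX -> d (br x y) z <= epsX -> d x z <= epsX ->
     br (br x y) z = br x z) /\
  (forall x y, d x y <= epsX -> d (phi x) (phi y) <= epsX ->
     phi (br x y) = br (phi x) (phi y)) /\
  (* contraction on local stable / unstable sets *)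
  (forall x y z, d x y < epsX -> br x y = y -> d x z < epsX -> br x z = z ->
     d (phi y) (phi z) <= / lamX * d y z) /\
  (forall x y z, d y x < epsX -> br y x = y -> d z x < epsX -> br z x = z ->
     d (phiinv y) (phiinv z) <= / lamX * d y z).

Definition irreducible (phi phiinv : X -> X) : Prop :=
  forall U V : X -> Prop, sm_open U -> sm_open V ->
    (exists x, U x) -> (exists x, V x) ->
    exists n : nat, (1 <= n)%nat /\ exists x, U x /\ V (Nat.iter n phi x).

Definition Xs (br : X -> X -> X) (x : X) (e : R) : X -> Prop :=
  fun y => d x y < e /\ br x y = y.
Definition Xu (br : X -> X -> X) (x : X) (e : R) : X -> Prop :=
  fun y => d x y < e /\ br y x = y.

Definition eps1_ok (br : X -> X -> X) (epsX eps1 : R) : Prop :=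
  0 < eps1 /\ eps1 <= epsX / 2 /\
  forall x y, d x y <= eps1 -> d x (br x y) < epsX / 2 /\ d y (br x y) < epsX / 2.

Definition eps2_ok (phi phiinv : X -> X) (br : X -> X -> X) (eps1 eps2 : R) : Prop :=
  0 < eps2 /\ eps2 < eps1 / 12 /\
  forall x y, d x y <= eps2 ->
    (forall i : Z, (-2 <= i <= 2)%Z ->
       d (zpow phi phiinv i x) (zpow phi phiinv i y) <= eps1 / 2) /\
    d (br x y) x <= eps1 / 4 /\ d (br x y) y <= eps1 / 4.

Definition rectangle (br : X -> X -> X) (eps1 : R) (A : X -> Prop) : Prop :=
  (exists x, A x) /\ diam A <= eps1 /\ forall x y, A x -> A y -> A (br x y).

Definition XsR (br : X -> X -> X) (eps1 : R) (x : X) (A : X -> Prop) : X -> Prop :=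
  fun y => Xs br x (2 * eps1) y /\ A y.
Definition XuR (br : X -> X -> X) (eps1 : R) (x : X) (A : X -> Prop) : X -> Prop :=
  fun y => Xu br x (2 * eps1) y /\ A y.

Definition proper (A : X -> Prop) : Prop :=
  sm_closed A /\ forall x, A x <-> sm_closure (sm_interior A) x.

Definition markov_partition (phi phiinv : X -> X) (br : X -> X -> X) (eps1 : R)
    (P : list (X -> Prop)) : Prop :=
  (forall A, In A P -> rectangle br eps1 A /\ proper A) /\
  (forall x, exists A, In A P /\ A x) /\
  (forall i j, (i < length P)%nat -> (j < length P)%nat -> i <> j ->
     forall x, ~ (sm_interior (nth i P (fun _ => False)) x /\
                  sm_interior (nth j P (fun _ => False)) x)) /\
  (forall i j x, (i < length P)%nat -> (j < length P)%nat ->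
     let Ri := nth i P (fun _ => False) in
     let Rj := nth j P (fun _ => False) in
     sm_interior Ri x -> sm_interior Rj (phi x) ->
     (forall z, XuR br eps1 (phi x) Rj z -> exists y, XuR br eps1 x Ri y /\ phi y = z) /\
     (forall y, XsR br eps1 x Ri y -> XsR br eps1 (phi x) Rj (phi y))).

Definition cell (phi phiinv : X -> X) (P : list (X -> Prop)) (n : nat) (k : Z -> nat)
  : X -> Prop :=
  fun x => forall i : Z, (1 - Z.of_nat n <= i <= Z.of_nat n - 1)%Z ->
    nth (k i) P (fun _ => False) (zpow phi phiinv i x).

Definition valid_index (P : list (X -> Prop)) (n : nat) (k : Z -> nat) : Prop :=
  forall i : Z, (1 - Z.of_nat n <= i <= Z.of_nat n - 1)%Z -> (k i < length P)%nat.

(* min_{R in R_n} diam R  (R_n = cells with nonempty interior; finite family) *)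
Definition min_diam_Rn (phi phiinv : X -> X) (P : list (X -> Prop)) (n : nat) : R :=
  real (Glb_Rbar (fun r => exists k, valid_index P n k /\
     (exists x, sm_interior (cell phi phiinv P n k) x) /\
     r = diam (cell phi phiinv P n k))).

Definition inf_diam_s (br : X -> X -> X) (eps1 : R) (A : X -> Prop) : R :=
  real (Glb_Rbar (fun r => exists x, A x /\ r = diam (XsR br eps1 x A))).
Definition inf_diam_u (br : X -> X -> X) (eps1 : R) (A : X -> Prop) : R :=
  real (Glb_Rbar (fun r => exists x, A x /\ r = diam (XuR br eps1 x A))).
Definition low_diam_s (br : X -> X -> X) (eps1 : R) (P : list (X -> Prop)) : R :=
  real (Glb_Rbar (fun r => exists A, In A P /\ r = inf_diam_s br eps1 A)).
Definition low_diam_u (br : X -> X -> X) (eps1 : R) (P : list (X -> Prop)) : R :=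
  real (Glb_Rbar (fun r => exists A, In A P /\ r = inf_diam_u br eps1 A)).

Definition lipschitz (f : X -> X) : Prop :=
  exists L, 0 <= L /\ forall x y, d (f x) (f y) <= L * d x y.
Definition Lip (f : X -> X) : R :=
  real (Glb_Rbar (fun L => 0 <= L /\ forall x y, d (f x) (f y) <= L * d x y)).

End SmaleDefs.

From Stdlib Require Import Reals List ZArith Lra Lia ClassicalEpsilon
  FunctionalExtensionality PropExtensionality.
From Coquelicot Require Import Rbar Lub.
Open Scope R_scope.

(* Let R be a cell of R_n with an interior point x and let R' be the rectangle of R_1
   containing w = phi^(1-n) x.  Along the itinerary of x the Markov property maps local
   stable sets into local stable sets, so phi^(n-1) maps X^s(w, R') into R; as phi^(1-n)
   is Lip(phi^-1)^(n-1)-Lipschitz, diam X^s(w, R') <= Lip(phi^-1)^(n-1) diam R.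
   The unstable bound is the stable bound for the time-reversed system
   (phi^-1, (x, y) |-> [y, x]): R_1 is Markov for it, its refinements have the same cells,
   and its local stable sets are the local unstable sets of phi.  The minimum ranges over
   a nonempty family because the preimages under the phi^i of the union of the interiors
   of the rectangles are open and dense, so finitely many of them intersect. *)

Lemma real_Lub_Rbar_le (E : R -> Prop) (B : R) :
  0 <= B -> (forall r, E r -> r <= B) -> real (Lub_Rbar E) <= B.
Proof.
  intros HB HE. destruct (Lub_Rbar_correct E) as [_ Hleast].
  assert (Hle : Rbar_le (Lub_Rbar E) B) by (apply Hleast; exact HE).
  destruct (Lub_Rbar E); simpl in *; lra.
Qed.

Lemma le_real_Lub_Rbar (E : R -> Prop) (M r : R) :
  (forall s, E s -> s <= M) -> E r -> r <= real (Lub_Rbar E).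
Proof.
  intros HM Hr. destruct (Lub_Rbar_correct E) as [Hub Hleast].
  assert (Hle : Rbar_le (Lub_Rbar E) M) by (apply Hleast; exact HM).
  specialize (Hub r Hr). destruct (Lub_Rbar E); simpl in *; lra.
Qed.

Lemma real_Lub_Rbar_nonneg (E : R -> Prop) :
  (forall r, E r -> 0 <= r) -> 0 <= real (Lub_Rbar E).
Proof.
  intros HE. destruct (Lub_Rbar_correct E) as [Hub Hleast].
  destruct (classic (exists r, E r)) as [[r Hr]|Hempty].
  - specialize (Hub r Hr). specialize (HE r Hr). destruct (Lub_Rbar E); simpl in *; lra.
  - assert (Hle : Rbar_le (Lub_Rbar E) m_infty)
      by (apply Hleast; intros r Hr; exfalso; eauto).
    destruct (Lub_Rbar E); simpl in *; lra.
Qed.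

Lemma real_Glb_Rbar_le (E : R -> Prop) (r : R) :
  (forall s, E s -> 0 <= s) -> E r -> real (Glb_Rbar E) <= r.
Proof.
  intros HE Hr. destruct (Glb_Rbar_correct E) as [Hlb Hgreatest].
  assert (Hge : Rbar_le 0 (Glb_Rbar E)) by (apply Hgreatest; exact HE).
  specialize (Hlb r Hr). destruct (Glb_Rbar E); simpl in *; lra.
Qed.

Lemma real_Glb_Rbar_nonneg (E : R -> Prop) :
  (forall s, E s -> 0 <= s) -> 0 <= real (Glb_Rbar E).
Proof.
  intros HE. destruct (Glb_Rbar_correct E) as [_ Hgreatest].
  assert (Hge : Rbar_le 0 (Glb_Rbar E)) by (apply Hgreatest; exact HE).
  destruct (Glb_Rbar E); simpl in *; lra.
Qed.

Lemma le_real_Glb_Rbar (E : R -> Prop) (m r : R) :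
  E r -> (forall s, E s -> m <= s) -> m <= real (Glb_Rbar E).
Proof.
  intros Hr HE. destruct (Glb_Rbar_correct E) as [Hlb Hgreatest].
  assert (Hge : Rbar_le m (Glb_Rbar E)) by (apply Hgreatest; exact HE).
  specialize (Hlb r Hr). destruct (Glb_Rbar E); simpl in *; lra.
Qed.

Lemma exists_ub_list {A : Type} (f : A -> R) (l : list A) :
  exists B, forall a, In a l -> f a <= B.
Proof.
  induction l as [|a l [B HB]].
  - exists 0. intros a [].
  - exists (Rmax (f a) B). intros c [<-|Hc].
    + apply Rmax_l.
    + eapply Rle_trans; [apply HB; exact Hc|apply Rmax_r].
Qed.

Lemma Rinv_mult_le_of_le_mult (c a D : R) :
  0 <= c -> 0 <= D -> a <= c * D -> / c * a <= D.
Proof.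
  intros Hc HD Ha. destruct (Req_dec c 0) as [->|Hc0].
  - rewrite Rinv_0. lra.
  - apply Rle_trans with (/ c * (c * D)).
    + apply Rmult_le_compat_l; [apply Rlt_le, Rinv_0_lt_compat|]; lra.
    + right. field. exact Hc0.
Qed.

Lemma powerRZ_1_sub_of_nat (L : R) (n : nat) :
  (1 <= n)%nat -> powerRZ L (1 - Z.of_nat n) = / L ^ (n - 1).
Proof.
  intros Hn. replace (1 - Z.of_nat n)%Z with (- Z.of_nat (n - 1))%Z by lia.
  rewrite powerRZ_neg', <- pow_powerRZ. reflexivity.
Qed.

Lemma Z_ind_from (a : Z) (A : Z -> Prop) :
  (forall b, (b < a)%Z -> A b) -> (forall b, (a <= b)%Z -> A (b - 1)%Z -> A b) ->
  forall b, A b.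
Proof.
  intros Hlt Hstep b. destruct (Z_lt_le_dec b a) as [Hb|Hb]; [auto|].
  replace b with (a + Z.of_nat (Z.to_nat (b - a)))%Z by lia.
  induction (Z.to_nat (b - a)) as [|m IH].
  - apply Hstep; [lia|]. apply Hlt. lia.
  - apply Hstep; [lia|]. replace (a + Z.of_nat (S m) - 1)%Z with (a + Z.of_nat m)%Z by lia.
    exact IH.
Qed.

(** * Metric spaces *)

Section Metric.
Variables (X : Type) (d : X -> X -> R).
Hypothesis d_metric : is_metric X d.

Lemma dist_nonneg x y : 0 <= d x y.
Proof. apply d_metric. Qed.

Lemma dist_xx x : d x x = 0.
Proof. apply d_metric. reflexivity. Qed.

Lemma dist_eq0 x y : d x y = 0 -> x = y.
Proof. apply d_metric. Qed.

Lemma dist_sym x y : d x y = d y x.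
Proof. apply d_metric. Qed.

Lemma dist_triangle x y z : d x z <= d x y + d y z.
Proof. apply d_metric. Qed.

Lemma sm_compact_bounded : sm_compact X d -> exists M, forall x y, d x y <= M.
Proof.
  intros Hcpt. destruct (classic (inhabited X)) as [[x0]|Hempty].
  2:{ exists 0. intros x. exfalso. exact (Hempty (inhabits x)). }
  destruct (Hcpt X (fun c y => d c y < 1)) as [l Hl].
  - intros c y Hy. exists (1 - d c y). split; [lra|].
    intros z Hz. pose proof (dist_triangle c y z). lra.
  - intros x. exists x. rewrite dist_xx. lra.
  - destruct (exists_ub_list (d x0) l) as [B HB].
    exists (2 * (B + 1)). intros a b.
    destruct (Hl a) as [ca [Hca Ha]]. destruct (Hl b) as [cb [Hcb Hb]].
    pose proof (HB _ Hca). pose proof (HB _ Hcb).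
    pose proof (dist_triangle a x0 b). pose proof (dist_triangle x0 ca a).
    pose proof (dist_triangle x0 cb b). rewrite (dist_sym a x0) in *. lra.
Qed.

Lemma diam_nonneg A : 0 <= diam X d A.
Proof. apply real_Lub_Rbar_nonneg. intros r (x & y & _ & _ & ->). apply dist_nonneg. Qed.

Lemma diam_le A B :
  0 <= B -> (forall x y, A x -> A y -> d x y <= B) -> diam X d A <= B.
Proof. intros HB HA. apply real_Lub_Rbar_le; [exact HB|]. intros r (x & y & Hx & Hy & ->). auto. Qed.

Lemma dist_le_diam M A x y :
  (forall a b, d a b <= M) -> A x -> A y -> d x y <= diam X d A.
Proof.
  intros HM Hx Hy. apply (le_real_Lub_Rbar _ M).
  - intros r (a & b & _ & _ & ->). apply HM.
  - exists x, y. auto.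
Qed.

Lemma diam_le_lipschitz_image M (A B : X -> Prop) (g : X -> X) (L : R) :
  (forall a b, d a b <= M) -> 0 <= L -> (forall x y, d (g x) (g y) <= L * d x y) ->
  (forall a, A a -> exists b, B b /\ a = g b) -> diam X d A <= L * diam X d B.
Proof.
  intros HM HL Hg HAB. apply diam_le.
  { apply Rmult_le_pos; [exact HL|apply diam_nonneg]. }
  intros a1 a2 Ha1 Ha2.
  destruct (HAB a1 Ha1) as [b1 [Hb1 ->]]. destruct (HAB a2 Ha2) as [b2 [Hb2 ->]].
  eapply Rle_trans; [apply Hg|].
  apply Rmult_le_compat_l; [exact HL|]. eapply dist_le_diam; eauto.
Qed.

Lemma Lip_spec f : lipschitz X d f ->
  0 <= Lip X d f /\ forall x y, d (f x) (f y) <= Lip X d f * d x y.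
Proof.
  intros [L0 [HL0 HL]]. unfold Lip.
  set (E := fun L => 0 <= L /\ forall x y, d (f x) (f y) <= L * d x y).
  destruct (Glb_Rbar_correct E) as [Hlb Hgreatest].
  assert (Hge : Rbar_le 0 (Glb_Rbar E)) by (apply Hgreatest; intros r [Hr _]; exact Hr).
  assert (Hle : Rbar_le (Glb_Rbar E) L0) by (apply Hlb; split; assumption).
  destruct (Glb_Rbar E) as [g| |]; simpl in Hge, Hle; try contradiction.
  split; [exact Hge|]. intros x y.
  destruct (Req_dec (d x y) 0) as [H0|H0].
  - apply dist_eq0 in H0. subst y. rewrite !dist_xx. lra.
  - assert (Hpos : 0 < d x y) by (pose proof (dist_nonneg x y); lra).
    assert (Hq : Rbar_le (d (f x) (f y) / d x y) g).
    { apply Hgreatest. intros L [_ HLxy]. simpl.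
      apply Rmult_le_reg_r with (d x y); [exact Hpos|].
      unfold Rdiv. rewrite Rmult_assoc, Rinv_l by lra. specialize (HLxy x y). lra. }
    simpl in Hq. apply Rmult_le_compat_r with (r := d x y) in Hq; [|lra].
    unfold Rdiv in Hq. rewrite Rmult_assoc, Rinv_l, Rmult_1_r in Hq by lra. exact Hq.
Qed.

Lemma iter_lipschitz f L m x y :
  0 <= L -> (forall a b, d (f a) (f b) <= L * d a b) ->
  d (Nat.iter m f x) (Nat.iter m f y) <= L ^ m * d x y.
Proof.
  intros HL Hf. induction m as [|m IH]; simpl.
  - lra.
  - eapply Rle_trans; [apply Hf|]. rewrite Rmult_assoc.
    apply Rmult_le_compat_l; assumption.
Qed.

Definition sm_dense (O : X -> Prop) : Prop :=
  forall x r, 0 < r -> exists y, d x y < r /\ O y.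

Lemma sm_interior_incl A x : sm_interior X d A x -> A x.
Proof. intros [r [Hr HA]]. apply HA. rewrite dist_xx. exact Hr. Qed.

Lemma sm_interior_mono (A B : X -> Prop) x :
  (forall y, A y -> B y) -> sm_interior X d A x -> sm_interior X d B x.
Proof. intros HAB [r [Hr HA]]. exists r. split; auto. Qed.

Lemma sm_open_interior A : sm_open X d (sm_interior X d A).
Proof.
  intros x [r [Hr HA]]. exists r. split; [exact Hr|]. intros y Hy.
  exists (r - d x y). split; [lra|]. intros z Hz. apply HA.
  pose proof (dist_triangle x y z). lra.
Qed.

Lemma sm_open_ext (A B : X -> Prop) :
  (forall y, A y <-> B y) -> sm_open X d A -> sm_open X d B.
Proof.
  intros HAB HA x Hx. apply HAB in Hx. destruct (HA x Hx) as [r [Hr H]].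
  exists r. split; [exact Hr|]. intros y Hy. apply HAB. auto.
Qed.

Lemma sm_open_inter (A B : X -> Prop) :
  sm_open X d A -> sm_open X d B -> sm_open X d (fun y => A y /\ B y).
Proof.
  intros HA HB x [Ax Bx].
  destruct (HA x Ax) as [r1 [Hr1 H1]]. destruct (HB x Bx) as [r2 [Hr2 H2]].
  exists (Rmin r1 r2). split; [apply Rmin_pos; assumption|].
  intros y Hy. pose proof (Rmin_l r1 r2). pose proof (Rmin_r r1 r2).
  split; [apply H1|apply H2]; lra.
Qed.

Lemma sm_dense_mono (A B : X -> Prop) :
  (forall y, A y -> B y) -> sm_dense A -> sm_dense B.
Proof.
  intros HAB HA x r Hr. destruct (HA x r Hr) as [y [Hy Ay]]. eauto.
Qed.

Lemma sm_dense_inter (A B : X -> Prop) :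
  sm_open X d A -> sm_dense A -> sm_dense B -> sm_dense (fun y => A y /\ B y).
Proof.
  intros HAo HAd HBd x r Hr.
  destruct (HAd x (r / 2) ltac:(lra)) as [y [Hxy Ay]].
  destruct (HAo y Ay) as [s [Hs HAs]].
  destruct (HBd y (Rmin (r / 2) s) ltac:(apply Rmin_pos; lra)) as [z [Hyz Bz]].
  pose proof (Rmin_l (r / 2) s). pose proof (Rmin_r (r / 2) s).
  exists z. split.
  - pose proof (dist_triangle x y z). lra.
  - split; [apply HAs; lra|exact Bz].
Qed.

Lemma sm_continuous_comp f g :
  sm_continuous X d f -> sm_continuous X d g -> sm_continuous X d (fun x => f (g x)).
Proof.
  intros Hf Hg x e He.
  destruct (Hf (g x) e He) as [del1 [Hdel1 H1]].
  destruct (Hg x del1 Hdel1) as [del2 [Hdel2 H2]].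
  exists del2. split; auto.
Qed.

Lemma sm_open_preimage f O :
  sm_continuous X d f -> sm_open X d O -> sm_open X d (fun y => O (f y)).
Proof.
  intros Hf HO x Ox. destruct (HO _ Ox) as [r [Hr H]].
  destruct (Hf x r Hr) as [del [Hdel Hdel']]. exists del. auto.
Qed.

Section Homeomorphism.
Variables f g : X -> X.
Hypothesis g_continuous : sm_continuous X d g.
Hypothesis f_g : forall y, f (g y) = y.
Hypothesis g_f : forall x, g (f x) = x.

Lemma sm_interior_preimage A x :
  sm_interior X d (fun y => A (f y)) x -> sm_interior X d A (f x).
Proof.
  intros [r [Hr HA]]. destruct (g_continuous (f x) r Hr) as [del [Hdel Hg]].
  exists del. split; [exact Hdel|]. intros y Hy.
  rewrite <- (f_g y). apply HA. rewrite <- (g_f x) at 1. auto.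
Qed.

Lemma sm_dense_preimage D : sm_dense D -> sm_dense (fun x => D (f x)).
Proof.
  intros HD x r Hr. destruct (g_continuous (f x) r Hr) as [del [Hdel Hg]].
  destruct (HD (f x) del Hdel) as [z [Hz Dz]].
  exists (g z). rewrite f_g. split; [|exact Dz].
  rewrite <- (g_f x) at 1. auto.
Qed.
End Homeomorphism.

Lemma forall_range_split (Q : Z -> X -> Prop) a b y : (a <= b)%Z ->
  (forall i, (a <= i <= b)%Z -> Q i y) <->
  (forall i, (a <= i <= b - 1)%Z -> Q i y) /\ Q b y.
Proof.
  intros Hab. split.
  - intros HQ. split; [intros i Hi; apply HQ; lia|apply HQ; lia].
  - intros [HQ HQb] i Hi. destruct (Z.eq_dec i b) as [->|Hib]; [exact HQb|].
    apply HQ. lia.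
Qed.

Lemma sm_open_forall_range (Q : Z -> X -> Prop) a b :
  (forall i, sm_open X d (Q i)) ->
  sm_open X d (fun y => forall i, (a <= i <= b)%Z -> Q i y).
Proof.
  intros HQ. induction b as [b Hb|b Hb IH] using (Z_ind_from a).
  - intros x _. exists 1. split; [lra|]. intros y _ i Hi. lia.
  - eapply sm_open_ext; [intros y; symmetry; apply forall_range_split; exact Hb|].
    apply sm_open_inter; [exact IH|apply HQ].
Qed.

Lemma sm_dense_forall_range (Q : Z -> X -> Prop) a b :
  (forall i, sm_open X d (Q i)) -> (forall i, sm_dense (Q i)) ->
  sm_dense (fun y => forall i, (a <= i <= b)%Z -> Q i y).
Proof.
  intros HQo HQd. induction b as [b Hb|b Hb IH] using (Z_ind_from a).
  - intros x r Hr. exists x. rewrite dist_xx. split; [exact Hr|]. intros i Hi. lia.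
  - eapply sm_dense_mono; [intros y; apply forall_range_split; exact Hb|].
    apply sm_dense_inter; [apply sm_open_forall_range; exact HQo|exact IH|apply HQd].
Qed.
End Metric.

(** * Integer iterates *)

Section Iterates.
Variables (X : Type) (phi phiinv : X -> X).
Hypothesis phi_phiinv : forall x, phi (phiinv x) = x.
Hypothesis phiinv_phi : forall x, phiinv (phi x) = x.

Local Notation zp := (zpow X phi phiinv).

Lemma zpow_succ i x : zp (Z.succ i) x = phi (zp i x).
Proof.
  destruct i as [|p|p]; [reflexivity| |].
  - replace (Z.succ (Z.pos p)) with (Z.pos (Pos.succ p)) by lia.
    simpl. rewrite Pos2Nat.inj_succ. reflexivity.
  - destruct (Pos.succ_pred_or p) as [->|Hp]; [simpl; rewrite phi_phiinv; reflexivity|].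
    rewrite <- Hp. replace (Z.succ (Z.neg (Pos.succ (Pos.pred p)))) with (Z.neg (Pos.pred p)) by lia.
    simpl. rewrite Pos2Nat.inj_succ. simpl. rewrite phi_phiinv. reflexivity.
Qed.

Lemma zpow_pred i x : zp (Z.pred i) x = phiinv (zp i x).
Proof. rewrite <- (Z.succ_pred i) at 2. rewrite zpow_succ, phiinv_phi. reflexivity. Qed.

Lemma zpow_add i j x : zp i (zp j x) = zp (i + j) x.
Proof.
  induction i as [|i IH|i IH] using Z.peano_ind; [reflexivity| |].
  - rewrite zpow_succ, IH, Z.add_succ_l, zpow_succ. reflexivity.
  - rewrite zpow_pred, IH, Z.add_pred_l, zpow_pred. reflexivity.
Qed.

Lemma zpow_opp_zpow i x : zp (- i) (zp i x) = x.
Proof. rewrite zpow_add, Z.add_opp_diag_l. reflexivity. Qed.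

Lemma zpow_zpow_opp i x : zp i (zp (- i) x) = x.
Proof. rewrite zpow_add, Z.add_opp_diag_r. reflexivity. Qed.

Lemma zpow_opp_of_nat m x : zp (- Z.of_nat m) x = Nat.iter m phiinv x.
Proof. destruct m; simpl; [reflexivity|]. rewrite SuccNat2Pos.id_succ. reflexivity. Qed.

Lemma zpow_continuous (d : X -> X -> R) i :
  sm_continuous X d phi -> sm_continuous X d phiinv -> sm_continuous X d (zp i).
Proof.
  intros Hphi Hphiinv.
  induction i as [|i IH|i IH] using Z.peano_ind.
  - intros x e He. exists e. auto.
  - intros x e He. destruct (sm_continuous_comp X d _ _ Hphi IH x e He) as [del [Hdel H]].
    exists del. split; [exact Hdel|]. intros y Hy. rewrite !zpow_succ. auto.
  - intros x e He. destruct (sm_continuous_comp X d _ _ Hphiinv IH x e He) as [del [Hdel H]].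
    exists del. split; [exact Hdel|]. intros y Hy. rewrite !zpow_pred. auto.
Qed.

Lemma zpow_forward_invariant (S : Z -> X -> Prop) a b y :
  (forall i z, (a <= i < b)%Z -> S i z -> S (i + 1)%Z (phi z)) -> S a y ->
  forall i, (a <= i <= b)%Z -> S i (zp (i - a) y).
Proof.
  intros Hstep Hy. induction i as [i Hi|i Hi IH] using (Z_ind_from a); intros Hab; [lia|].
  destruct (Z.eq_dec i a) as [->|Hia]; [rewrite Z.sub_diag; exact Hy|].
  replace i with (i - 1 + 1)%Z by lia. replace (i - 1 + 1 - a)%Z with (Z.succ (i - 1 - a)) by lia.
  rewrite zpow_succ. apply Hstep; [lia|]. apply IH. lia.
Qed.
End Iterates.

Lemma zpow_swap X phi phiinv i x : zpow X phiinv phi i x = zpow X phi phiinv (- i) x.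
Proof. destruct i; reflexivity. Qed.

(** * Cells of the refinements *)

Definition markov_stable (X : Type) (d : X -> X -> R) (phi : X -> X)
    (br : X -> X -> X) (eps1 : R) (P : list (X -> Prop)) : Prop :=
  forall i j x, (i < length P)%nat -> (j < length P)%nat ->
    sm_interior X d (nth i P (fun _ => False)) x ->
    sm_interior X d (nth j P (fun _ => False)) (phi x) ->
    forall y, XsR X d br eps1 x (nth i P (fun _ => False)) y ->
      XsR X d br eps1 (phi x) (nth j P (fun _ => False)) (phi y).

Section Cells.
Variables (X : Type) (d : X -> X -> R) (phi phiinv : X -> X) (P : list (X -> Prop)).
Hypothesis d_metric : is_metric X d.
Hypothesis phi_phiinv : forall x, phi (phiinv x) = x.
Hypothesis phiinv_phi : forall x, phiinv (phi x) = x.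
Hypothesis phi_continuous : sm_continuous X d phi.
Hypothesis phiinv_continuous : sm_continuous X d phiinv.

Local Notation zp := (zpow X phi phiinv).
Local Notation piece j := (nth j P (fun _ : X => False)).

Lemma zpow_preimage_open i (O : X -> Prop) :
  sm_open X d O -> sm_open X d (fun y => O (zp i y)).
Proof. apply sm_open_preimage, zpow_continuous; assumption. Qed.

Lemma zpow_preimage_dense i (D : X -> Prop) :
  sm_dense X d D -> sm_dense X d (fun y => D (zp i y)).
Proof.
  apply (sm_dense_preimage X d (zp i) (zp (- i))).
  - apply zpow_continuous; assumption.
  - apply zpow_zpow_opp; assumption.
  - apply zpow_opp_zpow; assumption.
Qed.

Lemma cell_interior_piece n k x i :
  sm_interior X d (cell X phi phiinv P n k) x -> (1 - Z.of_nat n <= i <= Z.of_nat n - 1)%Z ->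
  sm_interior X d (piece (k i)) (zp i x).
Proof.
  intros Hx Hi. apply (sm_interior_preimage X d (zp i) (zp (- i))).
  - apply zpow_continuous; assumption.
  - apply zpow_zpow_opp; assumption.
  - apply zpow_opp_zpow; assumption.
  - eapply sm_interior_mono; [|exact Hx]. intros y Hy. exact (Hy i Hi).
Qed.

Lemma union_interiors_dense :
  (forall A, In A P -> proper X d A) -> (forall x, exists A, In A P /\ A x) ->
  sm_dense X d (fun y => exists j, (j < length P)%nat /\ sm_interior X d (piece j) y).
Proof.
  intros Hproper Hcover x r Hr. destruct (Hcover x) as [A [HA Ax]].
  destruct (Hproper A HA) as [_ Hcl]. apply Hcl in Ax.
  destruct (Ax r Hr) as [y [Hy Hxy]].
  destruct (In_nth P A (fun _ => False) HA) as (j & Hj & <-).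
  exists y. split; [exact Hxy|]. exists j. auto.
Qed.

Lemma exists_cell_with_interior n :
  sm_infinite X -> (forall A, In A P -> proper X d A) ->
  (forall x, exists A, In A P /\ A x) ->
  exists k, valid_index X P n k /\ exists x, sm_interior X d (cell X phi phiinv P n k) x.
Proof.
  intros Hinf Hproper Hcover.
  destruct (classic (inhabited X)) as [[x0]|Hempty].
  2:{ exfalso. apply Hinf. exists nil. intros x. exact (Hempty (inhabits x)). }
  set (U := fun y => exists j, (j < length P)%nat /\ sm_interior X d (piece j) y).
  assert (U_open : sm_open X d U).
  { intros y (j & Hj & Hy). destruct (sm_open_interior X d d_metric _ y Hy) as [r [Hr H]].
    exists r. split; [exact Hr|]. intros z Hz. exists j. auto. }
  destruct (sm_dense_forall_range X d d_metric (fun i y => U (zp i y))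
              (1 - Z.of_nat n) (Z.of_nat n - 1)) with x0 1 as [x [_ Hx]].
  - intros i. apply zpow_preimage_open, U_open.
  - intros i. apply zpow_preimage_dense, union_interiors_dense; assumption.
  - lra.
  - destruct (choice (fun i j => (1 - Z.of_nat n <= i <= Z.of_nat n - 1)%Z ->
        (j < length P)%nat /\ sm_interior X d (piece j) (zp i x))) as [k Hk].
    { intros i. destruct (classic (1 - Z.of_nat n <= i <= Z.of_nat n - 1)%Z) as [Hi|Hi].
      - destruct (Hx i Hi) as (j & Hj & Hint). exists j. auto.
      - exists 0%nat. tauto. }
    exists k. split; [intros i Hi; apply Hk, Hi|]. exists x.
    destruct (sm_open_forall_range X d
                (fun i y => sm_interior X d (piece (k i)) (zp i y))
                (1 - Z.of_nat n) (Z.of_nat n - 1)) with x as [r [Hr Hball]].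
    + intros i. apply zpow_preimage_open, sm_open_interior, d_metric.
    + intros i Hi. apply Hk, Hi.
    + exists r. split; [exact Hr|]. intros y Hy i Hi.
      exact (sm_interior_incl X d d_metric _ _ (Hball y Hy i Hi)).
Qed.

Variables (br : X -> X -> X) (eps1 : R).
Hypothesis markov : markov_stable X d phi br eps1 P.

Lemma stable_set_in_cell n k x y :
  valid_index X P n k -> sm_interior X d (cell X phi phiinv P n k) x ->
  XsR X d br eps1 (zp (1 - Z.of_nat n) x) (piece (k (1 - Z.of_nat n)%Z)) y ->
  cell X phi phiinv P n k (zp (Z.of_nat n - 1) y).
Proof.
  intros Hk Hx Hy i Hi.
  destruct (zpow_forward_invariant X phi phiinv phi_phiinv
              (fun i z => XsR X d br eps1 (zp i x) (piece (k i)) z)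
              (1 - Z.of_nat n) (Z.of_nat n - 1) y) with i as [_ Hpiece].
  - intros j z Hj Hz. rewrite Z.add_1_r, zpow_succ by assumption.
    apply (markov (k j) (k (Z.succ j)) (zp j x)); [apply Hk; lia|apply Hk; lia| | |exact Hz].
    + apply (cell_interior_piece n); [exact Hx|lia].
    + rewrite <- zpow_succ by assumption. apply (cell_interior_piece n); [exact Hx|lia].
  - exact Hy.
  - exact Hi.
  - rewrite zpow_add by assumption.
    replace (i + (Z.of_nat n - 1))%Z with (i - (1 - Z.of_nat n))%Z by lia. exact Hpiece.
Qed.

Lemma low_diam_s_le_cell_diam M L n k x :
  (forall a b, d a b <= M) -> 0 <= L ->
  (forall a b, d (phiinv a) (phiinv b) <= L * d a b) ->
  (1 <= n)%nat -> valid_index X P n k -> sm_interior X d (cell X phi phiinv P n k) x ->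
  low_diam_s X d br eps1 P <= L ^ (n - 1) * diam X d (cell X phi phiinv P n k).
Proof.
  intros HM HL Hlip Hn Hk Hx.
  set (i0 := (1 - Z.of_nat n)%Z).
  set (A0 := piece (k i0)).
  assert (HA0 : In A0 P) by (apply nth_In, Hk; unfold i0; lia).
  assert (Hw : A0 (zp i0 x)).
  { apply (sm_interior_incl X d d_metric). apply (cell_interior_piece n); [exact Hx|unfold i0; lia]. }
  apply Rle_trans with (inf_diam_s X d br eps1 A0).
  { apply real_Glb_Rbar_le; [|exists A0; auto].
    intros r (A & _ & ->). apply real_Glb_Rbar_nonneg.
    intros r (y & _ & ->). apply diam_nonneg, d_metric. }
  apply Rle_trans with (diam X d (XsR X d br eps1 (zp i0 x) A0)).
  { apply real_Glb_Rbar_le; [|exists (zp i0 x); auto].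
    intros r (y & _ & ->). apply diam_nonneg, d_metric. }
  apply (diam_le_lipschitz_image X d d_metric M _ _ (zp i0)).
  - exact HM.
  - apply pow_le, HL.
  - intros a b. unfold i0. replace (1 - Z.of_nat n)%Z with (- Z.of_nat (n - 1))%Z by lia.
    rewrite !zpow_opp_of_nat. apply iter_lipschitz; assumption.
  - intros y Hy. exists (zp (Z.of_nat n - 1) y). split.
    + exact (stable_set_in_cell n k x y Hk Hx Hy).
    + rewrite zpow_add by assumption. unfold i0.
      replace (1 - Z.of_nat n + (Z.of_nat n - 1))%Z with 0%Z by lia. reflexivity.
Qed.

Theorem min_diam_Rn_ge_stable :
  sm_compact X d -> sm_infinite X -> (forall A, In A P -> proper X d A) ->
  (forall x, exists A, In A P /\ A x) -> lipschitz X d phiinv ->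
  forall n, (1 <= n)%nat ->
  min_diam_Rn X d phi phiinv P n >=
  powerRZ (Lip X d phiinv) (1 - Z.of_nat n) * low_diam_s X d br eps1 P.
Proof.
  intros Hcpt Hinf Hproper Hcover Hlip n Hn. apply Rle_ge.
  destruct (sm_compact_bounded X d d_metric Hcpt) as [M HM].
  destruct (Lip_spec X d d_metric phiinv Hlip) as [HL0 HL].
  destruct (exists_cell_with_interior n Hinf Hproper Hcover) as [k0 [Hk0 [x0 Hx0]]].
  rewrite powerRZ_1_sub_of_nat by exact Hn.
  eapply le_real_Glb_Rbar.
  { exists k0. split; [exact Hk0|]. split; [exists x0; exact Hx0|reflexivity]. }
  intros r (k & Hk & [x Hx] & ->).
  apply Rinv_mult_le_of_le_mult; [apply pow_le, HL0|apply diam_nonneg, d_metric|].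
  eapply low_diam_s_le_cell_diam; eauto.
Qed.
End Cells.

(** * Time reversal *)

Lemma cell_inv X phi phiinv P n k :
  cell X phiinv phi P n k = cell X phi phiinv P n (fun i => k (- i)%Z).
Proof.
  apply functional_extensionality. intros x. apply propositional_extensionality.
  unfold cell. split; intros Hx i Hi.
  - rewrite <- (Z.opp_involutive i) at 2. rewrite <- zpow_swap. apply Hx. lia.
  - rewrite zpow_swap. rewrite <- (Z.opp_involutive i) at 1. apply Hx. lia.
Qed.

Lemma valid_index_opp X P n k :
  valid_index X P n k -> valid_index X P n (fun i => k (- i)%Z).
Proof. intros Hk i Hi. apply Hk. lia. Qed.

Lemma min_diam_Rn_inv X d phi phiinv P n :
  min_diam_Rn X d phiinv phi P n = min_diam_Rn X d phi phiinv P n.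
Proof.
  unfold min_diam_Rn. f_equal. apply Glb_Rbar_eqset. intros r.
  split; intros (k & Hk & Hint & ->); exists (fun i => k (- i)%Z).
  - rewrite <- cell_inv. auto using valid_index_opp.
  - rewrite cell_inv. replace (fun i => k (- - i)%Z) with k
      by (apply functional_extensionality; intros i; rewrite Z.opp_involutive; reflexivity).
    auto using valid_index_opp.
Qed.

Lemma markov_stable_of_partition X d phi phiinv br eps1 P :
  markov_partition X d phi phiinv br eps1 P -> markov_stable X d phi br eps1 P.
Proof.
  intros (_ & _ & _ & Hmarkov) i j x Hi Hj Hx Hphix.
  apply (Hmarkov i j x Hi Hj Hx Hphix).
Qed.

Lemma markov_stable_inv_of_partition X d phi phiinv br eps1 P :
  (forall x, phi (phiinv x) = x) -> (forall x, phiinv (phi x) = x) ->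
  markov_partition X d phi phiinv br eps1 P ->
  markov_stable X d phiinv (fun x y => br y x) eps1 P.
Proof.
  intros phi_phiinv phiinv_phi (_ & _ & _ & Hmarkov) i j x Hi Hj Hx Hphiinvx y Hy.
  destruct (Hmarkov j i (phiinv x) Hj Hi Hphiinvx) as [Hunstable _].
  - rewrite phi_phiinv. exact Hx.
  - rewrite phi_phiinv in Hunstable. destruct (Hunstable y Hy) as [y' [Hy' <-]].
    rewrite phiinv_phi. exact Hy'.
Qed.

Theorem lemma6p15 (X : Type) (d : X -> X -> R) (phi phiinv : X -> X)
  (br : X -> X -> X) (epsX lamX eps1 eps2 : R) (P : list (X -> Prop)) :
  is_smale_space X d phi phiinv br epsX lamX ->
  irreducible X d phi phiinv ->
  eps1_ok X d br epsX eps1 ->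
  eps2_ok X d phi phiinv br eps1 eps2 ->
  markov_partition X d phi phiinv br eps1 P ->
  (forall A, In A P -> diam X d A <= eps2 / 2) ->
  (lipschitz X d phiinv ->
     forall n : nat, (1 <= n)%nat ->
       min_diam_Rn X d phi phiinv P n >=
       powerRZ (Lip X d phiinv) (1 - Z.of_nat n) * low_diam_s X d br eps1 P) /\
  (lipschitz X d phi ->
     forall n : nat, (1 <= n)%nat ->
       min_diam_Rn X d phi phiinv P n >=
       powerRZ (Lip X d phi) (1 - Z.of_nat n) * low_diam_u X d br eps1 P).
Proof.
  intros HS _ _ _ HMP _.
  destruct HS as (Hm & Hcpt & Hinf & Hpi & Hip & Hc & Hcinv & _).
  pose proof HMP as (HP & Hcover & _).
  assert (Hproper : forall A, In A P -> proper X d A) by (intros A HA; apply HP, HA).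
  split.
  - exact (min_diam_Rn_ge_stable X d phi phiinv P Hm Hpi Hip Hc Hcinv br eps1
             (markov_stable_of_partition X d phi phiinv br eps1 P HMP) Hcpt Hinf Hproper Hcover).
  - intros Hlip n Hn. rewrite <- min_diam_Rn_inv.
    (* X^u for [br] is, by conversion, X^s for the reversed bracket. *)
    change (low_diam_u X d br eps1 P) with (low_diam_s X d (fun x y => br y x) eps1 P).
    exact (min_diam_Rn_ge_stable X d phiinv phi P Hm Hip Hpi Hcinv Hc (fun x y => br y x) eps1
             (markov_stable_inv_of_partition X d phi phiinv br eps1 P Hpi Hip HMP)
             Hcpt Hinf Hproper Hcover Hlip n Hn).
Qed.
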